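(* Let $A\in\mathbb{R}_{\max}^{n\times n}$ with $\lambda(A)=0$, let $g=g(\mathrm{crit}(A))\ge2$, assume $(n,g)\ne(2,2)$, $T_1(A)=\mathrm{DM}(g,n)$, and that $\mathrm{crit}(A)$ contains, up to choice of first node, a unique cycle $Z_0$ of length $g$. Let $W_0$ be an interesting walk, and renumber the nodes so that $1,\dots,g$ are the nodes of $Z_0$ and $W_0=(g+1)\cdots n\,(1\cdots n)^g$. Then $\mathcal{D}(A)$ has, up to the choice of its first node, a unique Hamiltonian cycle of maximal weight among all Hamiltonian cycles, and it is the cycle $(1,2,\dots,n,1)$.
   Context: Max-plus semiring $\mathbb{R}_{\max}=\mathbb{R}\cup\{-\infty\}$ with $a\oplus b=\max(a,b)$, $a\otimes b=a+b$; $(AB)_{ij}=\max_k(a_{ik}+b_{kj})$; $A^t$ is the $t$-th max-plus power, $A^0=I$. $\mathcal{D}(A)$ is the digraph on $\{1,\dots,n\}$ with arc $(i,j)$ of weight $a_{ij}$ whenever $a_{ij}\ne-\infty$. A walk is a node sequence whose consecutive pairs are arcs, its length is its number of arcs and its weight the sum of its arc weights; cycles are closed walks with no proper closed subwalk; a Hamiltonian cycle visits every node. $\lambda(A)$ is the maximal cycle mean. $\mathrm{crit}(A)$ is the subgraph of all nodes and arcs of cycles attaining $\lambda(A)$; its nodes are critical. $g(\mathrm{crit}(A))$ is the maximum over strongly connected components of $\mathrm{crit}(A)$ of their minimal cycle length. The cyclicity of $\mathrm{crit}(A)$ is the lcm over components of the gcd of their cycle lengths. CSR terms: with $\gamma$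 the cyclicity of $\mathrm{crit}(A)$ and $\lambda(A)=0$, $M=I\oplus N\oplus\dots\oplus N^{n-1}$ where $N=A^\gamma$: $c_{ij}=m_{ij}$ if $j$ critical, else $-\infty$; $r_{ij}=m_{ij}$ if $i$ critical, else $-\infty$; $s_{ij}=a_{ij}$ if $(i,j)$ is an arc of $\mathrm{crit}(A)$, else $-\infty$; $CS^tR[A]$ is the product $CS^tR$. $B_N$ has $(B_N)_{ij}=-\infty$ if $i$ or $j$ is critical and $a_{ij}$ otherwise. $T_1(A)$ is the least $T\ge0$ with $A^t=CS^tR[A]\oplus B_N^t$ for all $t\ge T$. $\mathrm{DM}(g,n)=g(n-2)+n$. Twice optimal / interesting walks: a walk $W$ from $i$ to $j$ passing through at least one node of $Z_0$ is twice optimal if it has maximal weight among all walks from $i$ to $j$ passing through a node of $Z_0$ whose length is congruent to the length of $W$ modulo $g$, and has minimal length among all such walks of maximal weight. It is interesting if it is twice optimal and has length $\mathrm{DM}(g,n)+g-1$. *)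

(* Max-plus matrices over an arbitrary real field R
   (the paper uses R = the real numbers). *)
From HB Require Import structures.
From mathcomp Require Import all_boot all_order all_algebra.
From Stdlib Require Import ClassicalEpsilon.
Set Implicit Arguments. Unset Strict Implicit. Unset Printing Implicit Defensive.
Import Order.TTheory GRing.Theory Num.Theory.
Local Open Scope ring_scope.

Definition pb (P : Prop) : bool :=
  if excluded_middle_informative P then true else false.

Section MaxPlus.
Variable R : realFieldType.

(* R_max = R u {-oo}; None stands for -oo *)
Definition mp_max (a b : option R) : option R :=
  match a, b with
  | None, _ => b
  | _, None => a
  | Some x, Some y => Some (Num.max x y)
  end.
Definition mp_plus (a b : option R) : option R :=
  match a, b with Some x, Some y => Some (x + y) | _, _ => None end.

Variable n : nat.
Definition mpmx := 'I_n -> 'I_n -> option R.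

Definition mp_mul (A B : mpmx) : mpmx :=
  fun i j => \big[mp_max/None]_(k < n) mp_plus (A i k) (B k j).
Definition mp_oplus (A B : mpmx) : mpmx := fun i j => mp_max (A i j) (B i j).
Definition mp_id : mpmx := fun i j => if i == j then Some 0 else None.
Definition mp_pow (A : mpmx) (t : nat) : mpmx := iter t (fun M => mp_mul M A) mp_id.

Definition arcA (A : mpmx) : rel 'I_n := fun i j => A i j != None.

Definition is_walk (e : rel 'I_n) (s : seq 'I_n) : bool :=
  if s is x :: s' then path e x s' else false.
Definition wlen (s : seq 'I_n) : nat := (size s).-1.
Fixpoint wweight (A : mpmx) (s : seq 'I_n) : R :=
  match s with
  | x :: ((y :: _) as s') => odflt 0 (A x y) + wweight A s'
  | _ => 0
  end.
Definition olast (s : seq 'I_n) : option 'I_n := ohead (rev s).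
Definition warcs (s : seq 'I_n) : seq ('I_n * 'I_n) := zip s (behead s).

Definition is_closed_walk (e : rel 'I_n) (s : seq 'I_n) : bool :=
  is_walk e s && (0 < wlen s)%N && (ohead s == olast s).
(* cycle: closed walk with no proper closed subwalk *)
Definition is_cycle (e : rel 'I_n) (s : seq 'I_n) : Prop :=
  is_closed_walk e s /\
  forall (x0 : 'I_n) (a b : nat), (a < b)%N -> (b <= wlen s)%N ->
    (a, b) != (0%N, wlen s) -> nth x0 s a != nth x0 s b.
(* two cycles are equal up to the choice of the first node *)
Definition same_cycle (c1 c2 : seq 'I_n) : Prop :=
  exists k, rot k (behead c1) = behead c2.

Definition cmean (A : mpmx) (c : seq 'I_n) : R := wweight A c / (wlen c)%:R.

Definition max_cycle_mean_is (A : mpmx) (l : R) : Prop :=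
  (exists c, is_cycle (arcA A) c /\ cmean A c = l) /\
  (forall c, is_cycle (arcA A) c -> cmean A c <= l).

Definition crit_cycle (A : mpmx) (c : seq 'I_n) : Prop :=
  is_cycle (arcA A) c /\ forall c', is_cycle (arcA A) c' -> cmean A c' <= cmean A c.
Definition crit_node (A : mpmx) (i : 'I_n) : Prop :=
  exists c, crit_cycle A c /\ i \in c.
Definition crit_arc (A : mpmx) (i j : 'I_n) : Prop :=
  exists c, crit_cycle A c /\ (i, j) \in warcs c.
Definition critrel (A : mpmx) : rel 'I_n := fun i j => pb (crit_arc A i j).

Definition crit_scc (A : mpmx) (i j : 'I_n) : bool :=
  connect (critrel A) i j && connect (critrel A) j i.
Definition comp_cycle_len (A : mpmx) (i : 'I_n) (k : nat) : bool :=
  pb (exists c, is_cycle (critrel A) c /\ wlen c = k /\ all (crit_scc A i) c).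
(* minimal cycle length of the s.c.c. of the critical node i
   (cycle lengths are at most n, so the default n is never the answer
    unless it is attained) *)
Definition comp_min_len (A : mpmx) (i : 'I_n) : nat :=
  \big[minn/n]_(k < n.+1 | comp_cycle_len A i k) k.
Definition comp_gcd_len (A : mpmx) (i : 'I_n) : nat :=
  \big[gcdn/0%N]_(k < n.+1 | comp_cycle_len A i k) k.

Definition gcrit (A : mpmx) : nat :=
  \big[maxn/0%N]_(i < n | pb (crit_node A i)) comp_min_len A i.
Definition cyclicity (A : mpmx) : nat :=
  \big[lcmn/1%N]_(i < n | pb (crit_node A i)) comp_gcd_len A i.

Definition csrM (A : mpmx) : mpmx :=
  fun i j => \big[mp_max/None]_(k < n) mp_pow (mp_pow A (cyclicity A)) k i j.
Definition csrC (A : mpmx) : mpmx :=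
  fun i j => if pb (crit_node A j) then csrM A i j else None.
Definition csrR (A : mpmx) : mpmx :=
  fun i j => if pb (crit_node A i) then csrM A i j else None.
Definition csrS (A : mpmx) : mpmx :=
  fun i j => if pb (crit_arc A i j) then A i j else None.
Definition CSR (A : mpmx) (t : nat) : mpmx :=
  mp_mul (mp_mul (csrC A) (mp_pow (csrS A) t)) (csrR A).
Definition BN (A : mpmx) : mpmx :=
  fun i j => if pb (crit_node A i) || pb (crit_node A j) then None else A i j.

Definition CSR_from (A : mpmx) (T : nat) : Prop :=
  forall t, (T <= t)%N -> forall i j,
    mp_pow A t i j = mp_oplus (CSR A t) (mp_pow (BN A) t) i j.
Definition T1_is (A : mpmx) (D : nat) : Prop :=
  CSR_from A D /\ forall T, (T < D)%N -> ~ CSR_from A T.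

Definition DM (g m : nat) : nat := (g * (m - 2) + m)%N.

Definition through (Z0 W : seq 'I_n) : bool := has (fun x => x \in Z0) W.

Definition twice_optimal (A : mpmx) (g : nat) (Z0 W : seq 'I_n) : Prop :=
  [/\ is_walk (arcA A) W, through Z0 W,
      (forall V, is_walk (arcA A) V -> ohead V = ohead W -> olast V = olast W ->
         through Z0 V -> wlen V = wlen W %[mod g] -> wweight A V <= wweight A W) &
      (forall V, is_walk (arcA A) V -> ohead V = ohead W -> olast V = olast W ->
         through Z0 V -> wlen V = wlen W %[mod g] -> wweight A V = wweight A W ->
         (wlen W <= wlen V)%N)].

Definition interesting (A : mpmx) (g : nat) (Z0 W : seq 'I_n) : Prop :=
  twice_optimal A g Z0 W /\ wlen W = (DM g n + g - 1)%N.

Definition is_hamiltonian (A : mpmx) (c : seq 'I_n) : Prop :=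
  is_cycle (arcA A) c /\ forall x : 'I_n, x \in c.

End MaxPlus.

(* Number the nodes 0, ..., n-1 and let K be the Hamiltonian cycle
   (n-1, 0, 1, ..., n-1); its weight w(K) is at most lambda(A) = 0, and
   W0 = P K^g with P = (g, ..., n-1).  Twice optimality of W0 says that among
   the closed walks at n-1 that meet Z0 and whose length is a multiple of g,
   K^g has maximal weight and, among those of maximal weight, minimal length.
   Comparing K^g with K^(g/d), d = gcd(g, n), shows that g and n are coprime.
   Now let H <> K be a Hamiltonian cycle through n-1 with w(H) >= w(K).
   Exchanging arcs of H and K where they first differ yields closed walks
   U1, U2 at n-1 with |U1| + |U2| = 2n, 0 < |U1| < n and
   w(U1) + w(U2) = w(K) + w(H) >= 2 w(K).  Choosing 1 <= a <= g with
   g | |U1| + a n, the walks U1 K^a and U2 K^(2g-2-a) have lengths divisible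
   by g and total weight at least 2g w(K), so both are optimal, hence both
   have length at least g n.  As their lengths add up to 2gn, this forces
   |U1| + a n = g n, which is impossible for 0 < |U1| < n. *)

From HB Require Import structures.
From mathcomp Require Import all_boot all_order all_algebra.
From mathcomp Require Import zify ring lra.
Import Order.TTheory GRing.Theory Num.Theory.
Local Open Scope ring_scope.

Set Implicit Arguments.
Unset Strict Implicit.
Unset Printing Implicit Defensive.

Lemma first_mismatch {T : eqType} {s t : seq T} :
  size s = size t -> s != t ->
  exists a b s' j t', [/\ s = a ++ b :: s', t = a ++ j :: t' & b != j].
Proof.
elim: s t => [|x s IHs] [|y t] //= [eq_size]; rewrite eqseq_cons.
have [<- /= neq_st | neq_xy _] := eqVneq x y; last by exists [::], x, s, y, t.
have [a [b [s' [j [t' [-> -> neq_bj]]]]]] := IHs t eq_size neq_st.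
by exists (x :: a), b, s', j, t'.
Qed.

Lemma coprime_dvd_addM g N l : (0 < g)%N -> coprime g N ->
  exists2 a, (0 < a <= g)%N & (g %| l + a * N)%N.
Proof.
move=> g_gt0 /eqP coprime_gN.
have [a0 _] := Bezoutl N g_gt0; rewrite coprime_gN => dvd_inv.
pose r := (l * a0 %% g)%N.
have r_lt_g : (r < g)%N by rewrite ltn_mod.
have Er : (if r == 0 then g else r)%N = l * a0 %[mod g].
  by case: eqP => [r0|_]; rewrite ?modnn ?modn_mod // -/r r0.
exists (if r == 0 then g else r)%N; first by case: eqP => [|/eqP]; lia.
rewrite /dvdn -modnDmr -modnMml Er modnMml modnDmr -[X in (X + _)%N]muln1.
by rewrite -mulnA -mulnDr -/(dvdn _ _) dvdn_mull.
Qed.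

Lemma last_rot_index {T : eqType} (x y : T) s :
  y \in s -> last x (rot (index y s).+1 s) = y.
Proof.
move=> y_s; rewrite /rot (take_nth y) ?index_mem // nth_index //.
by rewrite last_cat last_rcons.
Qed.

Section Walks.
Variables (R : realFieldType) (n : nat) (A : mpmx R n).
Local Notation w := (wweight A).
Local Notation arc := (arcA A).

Definition loop_at (x : 'I_n) (u : seq 'I_n) : bool :=
  path arc x u && (last x u == x).

Lemma wweight_cons2 x y s : w (x :: y :: s) = odflt 0 (A x y) + w (y :: s).
Proof. by []. Qed.

Lemma wweight_cat x s y t :
  w (x :: s ++ y :: t) = w (x :: s) + odflt 0 (A (last x s) y) + w (y :: t).
Proof.
elim: s x => [|x' s IHs] x; first by rewrite /= add0r.
by rewrite cat_cons !wweight_cons2 IHs !addrA.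
Qed.

Lemma wweight_join x s t : w (x :: s ++ t) = w (x :: s) + w (last x s :: t).
Proof.
case: t => [|y t]; first by rewrite cats0 addr0.
by rewrite wweight_cat addrA.
Qed.

Lemma olast_cons (x : 'I_n) s : olast (x :: s) = Some (last x s).
Proof. by rewrite /olast lastI rev_rcons. Qed.

Lemma walk_cat_path (e : rel 'I_n) s y t : is_walk e (s ++ y :: t) -> path e y t.
Proof. by case: s => [|x s] //=; rewrite cat_path => /andP[_ /andP[]]. Qed.

Lemma loop_at_cat x u v : loop_at x u -> loop_at x v -> loop_at x (u ++ v).
Proof.
by case/andP=> pu /eqP lu /andP[pv lv]; rewrite /loop_at cat_path last_cat lu pu pv.
Qed.

Lemma wweight_loop_cat x u v :
  loop_at x u -> w (x :: u ++ v) = w (x :: u) + w (x :: v).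
Proof. by case/andP=> _ /eqP lu; rewrite wweight_join lu. Qed.

Lemma loop_at_rot x s k : loop_at x s -> loop_at (last x (rot k s)) (rot k s).
Proof.
case/andP=> ps /eqP ls.
have: cycle arc (rot k s) by rewrite rot_cycle (cycle_path x) ls.
by rewrite /loop_at (cycle_path x); case: (rot k s) => [|y r] /= p_r; rewrite ?p_r eqxx.
Qed.

Lemma wweight_loop_rot x s k :
  last x s = x -> w (last x (rot k s) :: rot k s) = w (x :: s).
Proof.
move=> ls; rewrite /rot; have := cat_take_drop k s.
move: (take k s) (drop k s) => p q Es; rewrite -{}Es in ls *.
case: p ls => [|y p] ls; first by rewrite cat0s in ls *; rewrite cats0 ls.
case: q ls => [|y' q] ls; first by rewrite cats0 in ls *; rewrite cat0s ls.
rewrite wweight_join [in RHS]wweight_join addrC.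
by rewrite -[X in _ = w (X :: _) + _]ls !last_cat.
Qed.

(* With s = a b B j D and t = a j E diverging after a, take u1 = a j D and
   u2 = a b B j E. *)
Lemma loop_exchange z s t :
  loop_at z s -> loop_at z t -> uniq t -> {subset t <= s} ->
  size s = size t -> s != t ->
  exists u1 u2, [/\ loop_at z u1 /\ loop_at z u2, {subset t <= u2},
    (0 < size u1 < size s)%N, (size u1 + size u2 = size s + size t)%N &
    w (z :: u1) + w (z :: u2) = w (z :: s) + w (z :: t)].
Proof.
move=> /andP[ps /eqP ls] /andP[pt /eqP lt] ut sub_ts eq_size neq_st.
have [a [b [s' [j [t' [Es Et neq_bj]]]]]] := first_mismatch eq_size neq_st.
have j_s' : j \in s'.
  have : j \in s by apply: sub_ts; rewrite Et mem_cat mem_head orbT.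
  move: ut; rewrite Et cat_uniq /= => /and3P[_ /norP[/negbTE j_a _] _].
  by rewrite Es mem_cat j_a in_cons eq_sym (negbTE neq_bj).
case/splitPr: j_s' Es => B D Es; subst s t.
rewrite cat_path /= cat_path /= in ps; case/and5P: ps => pa ab pB Bj pD.
rewrite cat_path /= in pt; case/and3P: pt => _ aj pt'.
rewrite last_cat /= last_cat /= in ls; rewrite last_cat /= in lt.
exists (a ++ j :: D), (a ++ b :: B ++ j :: t'); split.
- rewrite /loop_at !cat_path !last_cat /= cat_path last_cat /=.
  by rewrite pa ab pB Bj aj pD pt' ls lt eqxx.
- by move=> x; rewrite !mem_cat !in_cons mem_cat in_cons => /or3P[] ->; rewrite ?orbT.
- by rewrite !size_cat /= size_cat /=; lia.
- by rewrite !size_cat /= !size_cat /=; lia.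
- by rewrite !wweight_cat; ring.
Qed.

Lemma cycle_uniq (e : rel 'I_n) x s : is_cycle e (x :: s) -> uniq s.
Proof.
case=> _ simple; apply/(uniqP x) => i j i_lt j_lt eq_ij.
apply/eqP; apply: contraT => neq_ij.
wlog lt_ij : i j i_lt j_lt eq_ij neq_ij / (i < j)%N.
  move=> W; have [l|l|l] := ltngtP i j; first exact: (W i j).
    by apply: W l => //; rewrite eq_sym.
  by rewrite l eqxx in neq_ij.
by have := simple x i.+1 j.+1 lt_ij j_lt isT; rewrite /= eq_ij eqxx.
Qed.

Lemma loop_at_cycle x s : loop_at x s -> uniq s -> s != [::] -> is_cycle arc (x :: s).
Proof.
move=> /andP[ps /eqP ls] us ns; split.
  by rewrite /is_closed_walk /= ps /wlen /= lt0n size_eq0 ns olast_cons ls /=.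
move=> x0 [|a] [|b] //= lt_ab; rewrite /wlen /= => b_lt neq_ab.
  have last_s : nth x0 s (size s).-1 = x.
    by rewrite nth_last; case: s ns ls {us ps b_lt neq_ab}.
  have size_s : (0 < size s)%N by rewrite lt0n size_eq0.
  rewrite -last_s nth_uniq ?ltn_predL //.
  by apply: contra_neq neq_ab => <-; rewrite prednK.
by rewrite ltnS in lt_ab; rewrite nth_uniq ?(ltn_eqF lt_ab) ?(ltn_trans lt_ab).
Qed.

Lemma is_hamiltonian_loop x s :
  is_hamiltonian A (x :: s) <-> loop_at x s /\ perm_eq s (enum 'I_n).
Proof.
split=> [[[closed simple] cover] | [loop_s perm_s]].
  have uniq_s := cycle_uniq (conj closed simple).
  move: closed; rewrite /is_closed_walk /= olast_cons /wlen /= lt0n size_eq0.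
  case/andP=> /andP[ps ns] /eqP[ls]; split; first by rewrite /loop_at ps -ls eqxx.
  apply: uniq_perm; rewrite ?enum_uniq // => y; rewrite mem_enum.
  have := cover y; rewrite in_cons => /orP[/eqP -> | -> //].
  by case: (s) ns ls => // y0 s' _ /= ->; rewrite mem_last.
have uniq_s : uniq s by rewrite (perm_uniq perm_s) enum_uniq.
split=> [|y]; last by rewrite in_cons (perm_mem perm_s) mem_enum orbT.
apply: loop_at_cycle => //; rewrite -size_eq0 (perm_size perm_s) size_enum_ord.
by rewrite -lt0n (leq_ltn_trans _ (ltn_ord x)).
Qed.

Lemma twice_optimal_loop g Z0 x P L u :
  twice_optimal A g Z0 (x :: P ++ L) ->
  loop_at (last x P) L -> loop_at (last x P) u ->
  through Z0 (x :: P ++ u) -> size u = size L %[mod g] ->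
  w (last x P :: u) <= w (last x P :: L) /\
  (w (last x P :: L) <= w (last x P :: u) -> (size L <= size u)%N).
Proof.
move=> [walkW _ maxW minW] /andP[_ /eqP lL] /andP[pu /eqP lu] thr_u eq_mod.
have walk_u : is_walk arc (x :: P ++ u).
  by move: walkW; rewrite /= !cat_path pu => /andP[-> _].
have last_u : olast (x :: P ++ u) = olast (x :: P ++ L).
  by rewrite !olast_cons !last_cat lu lL.
have len_u : wlen (x :: P ++ u) = wlen (x :: P ++ L) %[mod g].
  by rewrite /wlen /= !size_cat -modnDmr eq_mod modnDmr.
have := minW _ walk_u erefl last_u thr_u len_u.
have := maxW _ walk_u erefl last_u thr_u len_u.
rewrite !wweight_join lerD2l /wlen ![size (x :: _)]/= !size_cat leq_add2l.
move=> max_u min_u.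
split=> // heavy; apply: min_u; congr (_ + _).
by apply/le_anti; rewrite max_u heavy.
Qed.

End Walks.

Section HeaviestHamiltonianCycle.
Variables (R : realFieldType) (m : nat).
Local Notation N := m.+1.
Variables (A : mpmx R N) (g : nat) (Z0 W0 : seq 'I_N).
Hypothesis cycle_mean_le0 : forall c, is_cycle (arcA A) c -> cmean A c <= 0.
Hypothesis g_ge2 : (2 <= g)%N.
Hypothesis g_leN : (g <= N)%N.
Hypothesis Z0_nodes : forall x : 'I_N, (x \in Z0) = (x < g)%N.
Hypothesis W0_opt : twice_optimal A g Z0 W0.
Hypothesis W0_nodes : map val W0 = iota g (N - g) ++ flatten (nseq g (iota 0 N)).

Local Notation w := (wweight A).
Local Notation arc := (arcA A).
Local Notation z := (@ord_max m).
Local Notation o := (@ord0 m).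
Local Notation tour := (enum 'I_N).
Local Notation wK := (w (z :: tour)).

Definition tours k : seq 'I_N := flatten (nseq k tour).

Lemma tour_cons : tour = o :: behead tour.
Proof.
apply: (inj_map val_inj); rewrite val_enum_ord.
by case: (enum 'I_N) (val_enum_ord m.+1) => [|x s] //= [<- ->].
Qed.

Lemma last_tour x : last x tour = z.
Proof.
apply: val_inj; rewrite -(last_map val) val_enum_ord -nth_last size_iota.
by rewrite nth_iota.
Qed.

Lemma W0_tours : W0 = take (N - g) W0 ++ tours g.
Proof.
rewrite -{1}(cat_take_drop (N - g) W0); congr (_ ++ _).
apply: (inj_map val_inj); rewrite map_drop W0_nodes drop_size_cat ?size_iota //.
by rewrite map_flatten map_nseq val_enum_ord.
Qed.

Lemma last_behead_tour : last o (behead tour) = z.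
Proof. by rewrite -(last_tour o) [in RHS]tour_cons. Qed.

Lemma loop_tour : loop_at A z tour.
Proof.
have : is_walk arc W0 by case: W0_opt.
rewrite W0_tours; case: g g_ge2 => [|[|k]] // _.
have -> : tours k.+2 = o :: behead tour ++ o :: behead tour ++ tours k.
  by rewrite /tours /= -!cat_cons -tour_cons.
move/walk_cat_path; rewrite cat_path last_behead_tour => /and3P[p_be zo _].
by rewrite /loop_at last_tour eqxx tour_cons /= zo p_be.
Qed.

Lemma tour_weight_le0 : wK <= 0.
Proof.
have tour_cycle : is_cycle arc (z :: tour).
  by apply: loop_at_cycle; rewrite ?loop_tour ?enum_uniq // tour_cons.
have := cycle_mean_le0 tour_cycle.
by rewrite /cmean /wlen /= size_enum_ord pmulrn ler_pdivrMr ?ltr0n // mul0r.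
Qed.

Lemma toursS k : tours k.+1 = tour ++ tours k.
Proof. by []. Qed.

Lemma loop_tours k : loop_at A z (tours k).
Proof.
elim: k => [|k IHk]; first by rewrite /loop_at eqxx.
by rewrite toursS loop_at_cat ?loop_tour.
Qed.

Lemma size_tours k : size (tours k) = (k * N)%N.
Proof. by elim: k => // k IHk; rewrite toursS size_cat IHk size_enum_ord mulSn. Qed.

Lemma wweight_tours k : w (z :: tours k) = wK *+ k.
Proof.
by elim: k => // k IHk; rewrite toursS wweight_loop_cat ?loop_tour // IHk mulrS.
Qed.

Lemma mem_tours k x : (0 < k)%N -> x \in tours k.
Proof. by case: k => // k _; rewrite toursS mem_cat mem_enum. Qed.

Lemma ord0_in_Z0 : o \in Z0.
Proof. by rewrite Z0_nodes; apply: ltnW. Qed.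

(* If g = N then W0 = K^g, and the walk (0, ..., N-1) would compete with it
   with a congruent but strictly shorter length. *)
Lemma g_ltN : (g < N)%N.
Proof.
rewrite ltn_neqAle g_leN andbT; apply/eqP => gN.
have W0E : W0 = tour ++ tours g.-1 by rewrite W0_tours gN subnn take0.
rewrite {1}tour_cons in W0E.
have opt := W0_opt; rewrite W0E in opt.
have := twice_optimal_loop (u := [::]) opt.
rewrite last_behead_tour wweight_tours size_tours => /(_ (loop_tours _)) long.
have loop_nil : loop_at A z [::] by rewrite /loop_at eqxx.
have thr : through Z0 (o :: behead tour ++ [::]) by rewrite /through /= ord0_in_Z0.
have len : 0 = g.-1 * N %[mod g] by rewrite gN modnMl mod0n.
have [_ short] := long loop_nil thr len.
have := short (mulrn_wle0 _ tour_weight_le0).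
by rewrite leqn0 muln_eq0; lia.
Qed.

Lemma W0_prefix : exists p P, W0 = p :: P ++ tours g /\ last p P = z.
Proof.
have vals : map val (take (N - g) W0) = iota g (N - g).
  by rewrite map_take W0_nodes take_size_cat ?size_iota.
case E: (take (N - g) W0) vals => [|p P] vals.
  by move/(congr1 size): vals; rewrite size_iota /=; have := g_ltN; lia.
exists p, P; split; first by rewrite W0_tours E.
apply: val_inj; rewrite -(last_map val) -[last _ _]/(last 0%N (map val (p :: P))).
by rewrite vals -nth_last size_iota nth_iota /=; have := g_ltN; lia.
Qed.

Lemma heavy_loops_are_long u :
  loop_at A z u -> through Z0 u -> (g %| size u)%N ->
  w (z :: u) <= wK *+ g /\ (wK *+ g <= w (z :: u) -> (g * N <= size u)%N).
Proof.
move=> loop_u thr_u dvd_u; have [p [P [W0E lP]]] := W0_prefix.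
have opt := W0_opt; rewrite W0E in opt.
have := twice_optimal_loop (u := u) opt.
rewrite lP wweight_tours size_tours => /(_ (loop_tours _) loop_u); apply.
  by rewrite /through -cat_cons has_cat; apply/orP; right.
by rewrite modnMr; apply/eqP.
Qed.

Lemma coprime_g_N : coprime g N.
Proof.
set d := gcdn g N; set q := (g %/ d)%N.
have d_gt0 : (0 < d)%N by rewrite gcdn_gt0 orbT.
have g_eq : g = (q * d)%N by rewrite divnK ?dvdn_gcdl.
have q_gt0 : (0 < q)%N by rewrite divn_gt0 // dvdn_leq ?dvdn_gcdl //; lia.
have thr : through Z0 (tours q) by apply/hasP; exists o; rewrite ?mem_tours ?ord0_in_Z0.
have dvd : (g %| size (tours q))%N by rewrite size_tours {1}g_eq dvdn_pmul2l ?dvdn_gcdr.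
have [_ long] := heavy_loops_are_long (loop_tours q) thr dvd.
have heavy : wK *+ g <= w (z :: tours q).
  by rewrite wweight_tours ler_wnMn2l ?tour_weight_le0 ?leq_div.
have := long heavy; rewrite size_tours leq_pmul2r // {1}g_eq.
by rewrite -[X in (_ <= X)%N]muln1 leq_pmul2l // /coprime -/d; lia.
Qed.

Lemma loop_pair_light u1 u2 :
  loop_at A z u1 -> loop_at A z u2 -> o \in u2 ->
  (0 < size u1 < N)%N -> (size u1 + size u2 = N + N)%N ->
  w (z :: u1) + w (z :: u2) < wK + wK.
Proof.
move=> loop1 loop2 o_u2 size_u1 size_sum.
have [a /andP[a_gt0 a_le_g] dvd1] :=
  coprime_dvd_addM (size u1) (ltnW g_ge2) coprime_g_N.
set b := (2 * g - 2 - a)%N.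
have ab_sum : (a + b + 2 = g + g)%N by rewrite /b; lia.
have tours_sum : (b * N + a * N + 2 * N = g * (2 * N))%N.
  by rewrite -!mulnDl mulnCA mulnA; congr (_ * _); lia.
have thr1 : through Z0 (u1 ++ tours a).
  by rewrite /through has_cat; apply/orP; right; apply/hasP; exists o;
    rewrite ?mem_tours ?ord0_in_Z0.
have thr2 : through Z0 (u2 ++ tours b).
  by apply/hasP; exists o; rewrite ?mem_cat ?o_u2 ?ord0_in_Z0.
have dvd_v1 : (g %| size (u1 ++ tours a))%N by rewrite size_cat size_tours.
have dvd_v2 : (g %| size (u2 ++ tours b))%N.
  have -> : size (u2 ++ tours b) = (g * (2 * N) - (size u1 + a * N))%N.
    by rewrite size_cat size_tours; lia.
  by rewrite dvdn_sub ?dvdn_mulr.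
have [light1 long1] :=
  heavy_loops_are_long (loop_at_cat loop1 (loop_tours a)) thr1 dvd_v1.
have [light2 long2] :=
  heavy_loops_are_long (loop_at_cat loop2 (loop_tours b)) thr2 dvd_v2.
rewrite !wweight_loop_cat // !wweight_tours !size_cat !size_tours
  in light1 light2 long1 long2.
have sum_tours : wK *+ a + wK *+ b + (wK + wK) = wK *+ g + wK *+ g.
  by rewrite -mulr2n -!mulrnDr ab_sum.
rewrite ltNge; apply/negP => heavy.
have /long1 long_v1 : wK *+ g <= w (z :: u1) + wK *+ a by lra.
have /long2 long_v2 : wK *+ g <= w (z :: u2) + wK *+ b by lra.
clear -size_u1 size_sum a_le_g ab_sum tours_sum long_v1 long_v2.
have a_eq_g : a = g.
  apply/eqP; rewrite eqn_leq a_le_g -ltnS -(ltn_pmul2r (ltn0Sn m)) mulSn; lia.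
have : ((b + 2) * N = g * N)%N by congr (_ * _); lia.
rewrite mulnDl; lia.
Qed.

Lemma hamiltonian_loop_lighter t :
  loop_at A z t -> perm_eq t tour -> t != tour -> w (z :: t) < wK.
Proof.
move=> loop_t perm_t neq_t.
have uniq_t : uniq t by rewrite (perm_uniq perm_t) enum_uniq.
have sub_t : {subset t <= tour} by move=> y; rewrite mem_enum.
have neq_tour : tour != t by rewrite eq_sym.
have [u1 [u2 [[loop1 loop2] t_u2 size_u1 size_sum weight_sum]]] :=
  loop_exchange loop_tour loop_t uniq_t sub_t (esym (perm_size perm_t)) neq_tour.
have o_u2 : o \in u2 by apply: t_u2; rewrite (perm_mem perm_t) mem_enum.
rewrite (perm_size perm_t) size_enum_ord in size_u1 size_sum.
have := loop_pair_light loop1 loop2 o_u2 size_u1 size_sum.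
by rewrite weight_sum ltrD2l.
Qed.

Lemma tour_heaviest_hamiltonian H0 : map val H0 = rcons (iota 0 N) 0%N ->
  is_hamiltonian A H0 /\
  (forall c, is_hamiltonian A c ->
     w c <= w H0 /\ (w c = w H0 -> same_cycle c H0)).
Proof.
move=> H0_nodes.
have last_rot1 : last z (rot 1 tour) = o by rewrite tour_cons rot1_cons last_rcons.
have H0E : H0 = o :: rot 1 tour.
  apply: (inj_map val_inj); rewrite H0_nodes /= map_rot val_enum_ord.
  by rewrite -[iota 0 N]/(0%N :: iota 1 m) rot1_cons.
have H0_weight : w H0 = wK by rewrite H0E -last_rot1 wweight_loop_rot ?last_tour.
split=> [|[[[]] //|x s /is_hamiltonian_loop[loop_s perm_s]]].
  rewrite H0E is_hamiltonian_loop -{1}last_rot1 loop_at_rot ?loop_tour //.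
  by rewrite perm_rot.
have z_s : z \in s by rewrite (perm_mem perm_s) mem_enum.
set k := (index z s).+1; set t := rot k s.
have last_t : last x t = z by apply: last_rot_index.
have loop_t : loop_at A z t by rewrite -last_t loop_at_rot.
have weight_t : w (z :: t) = w (x :: s).
  by rewrite -last_t wweight_loop_rot //; case/andP: loop_s => _ /eqP.
have perm_t : perm_eq t tour by rewrite perm_rot.
rewrite H0_weight -weight_t.
have [t_tour | neq_t] := eqVneq t tour.
  split=> [|_]; first by rewrite t_tour.
  by exists (rot_add s k 1); rewrite H0E /= -rot_rot_add -/t t_tour.
have lt_t := hamiltonian_loop_lighter loop_t perm_t neq_t.
by split=> [|eq_t]; [apply: ltW | move: lt_t; rewrite eq_t ltxx].
Qed.

End HeaviestHamiltonianCycle.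

Lemma gcrit_le (R : realFieldType) n (A : mpmx R n) : (gcrit A <= n)%N.
Proof.
apply: (big_ind (fun k => k <= n)%N) => // [k l|i _]; first by rewrite geq_max => ->.
apply: (big_ind (fun k => k <= n)%N) => // [k l k_le _|k _]; first by rewrite geq_min k_le.
by rewrite -ltnS.
Qed.

Theorem corollaryc (R : realFieldType) (n : nat) (A : mpmx R n) (g : nat)
    (Z0 W0 : seq 'I_n) :
  max_cycle_mean_is A 0 ->
  g = gcrit A ->
  (2 <= g)%N ->
  (n, g) != (2%N, 2%N) ->
  T1_is A (DM g n) ->
  is_cycle (critrel A) Z0 -> wlen Z0 = g ->
  (forall c, is_cycle (critrel A) c -> wlen c = g -> same_cycle c Z0) ->
  interesting A g Z0 W0 ->
  (forall x : 'I_n, (x \in Z0) = (x < g)%N) ->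
  map val W0 = iota g (n - g) ++ flatten (nseq g (iota 0 n)) ->
  forall H0 : seq 'I_n, map val H0 = rcons (iota 0 n) 0%N ->
    is_hamiltonian A H0 /\
    (forall c, is_hamiltonian A c ->
       wweight A c <= wweight A H0 /\
       (wweight A c = wweight A H0 -> same_cycle c H0)).
Proof.
move=> [_ mean_le0] g_crit g_ge2 _ _ _ _ _ [W0_opt _] Z0_nodes W0_nodes.
have g_le_n : (g <= n)%N by rewrite g_crit gcrit_le.
case: n => [|m] in A Z0 W0 g_crit mean_le0 W0_opt Z0_nodes W0_nodes g_le_n *.
  by case: W0_opt; case: W0 {W0_nodes} => [|[]].
exact: (tour_heaviest_hamiltonian mean_le0 g_ge2 g_le_n Z0_nodes W0_opt
  W0_nodes).
Qed.
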